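(* Consider the SMCP instance with $|V|=4$ and $p_{uv}=p=0.64$ for all six pairs. The maximum, over all online algorithms, of the expected size of the matching produced equals $$p+p^2+(1-p)p(1+p)+(1-p)^2p(1+p)+(1-p)^3\big(1-(1-p)^3\big)\approx 1.607.$$
   Context: SMCP: vertex set $V$, probabilities $p_{uv}$ for unordered pairs; the random graph $G$ contains each pair independently with probability $p_{uv}$. An online algorithm knows $V$ and the $p_{uv}$ but not $G$; it repeatedly (adaptively, possibly randomly) probes a not-yet-probed pair of currently unmatched vertices; if the pair is an edge of $G$ it must be added to the matching and both endpoints become matched, otherwise both remain available. *)

From Stdlib Require Import Reals List Arith Bool.
Import ListNotations.
Open Scope R_scope.

(** SMCP on the complete graph with vertex set V = {0,1,2,3}.
    The six unordered pairs are indexed 0..5. *)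
Definition pairs : list (nat * nat) :=
  [(0,1); (0,2); (0,3); (1,2); (1,3); (2,3)]%nat.

Definition pair_at (e : nat) : nat * nat := nth e pairs (0%nat, 0%nat).

(** A history: the sequence of probes made so far (pair index, outcome:
    true = the pair is an edge of G, hence added to the matching). *)
Definition history := list (nat * bool).

Definition matched (h : history) (v : nat) : bool :=
  existsb (fun eb => snd eb &&
     (Nat.eqb (fst (pair_at (fst eb))) v || Nat.eqb (snd (pair_at (fst eb))) v)) h.

Definition probed (h : history) (e : nat) : bool :=
  existsb (fun eb => Nat.eqb (fst eb) e) h.

Definition valid (h : history) (e : nat) : bool :=
  Nat.ltb e 6 && negb (probed h e)
  && negb (matched h (fst (pair_at e))) && negb (matched h (snd (pair_at e))).

(** A (possibly randomized, adaptive) online algorithm: given the history,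
    a probability distribution (weights) over the next pair to probe. *)
Definition policy := history -> nat -> R.

(** Admissibility: the weights form a probability distribution on the valid
    pairs whenever some pair can still be probed (the algorithm keeps probing
    as long as possible). *)
Definition admissible (pol : policy) : Prop :=
  forall h : history,
    (forall e, (e < 6)%nat -> 0 <= pol h e) /\
    (forall e, (e < 6)%nat -> valid h e = false -> pol h e = 0) /\
    ((exists e, valid h e = true) -> sum_f_R0 (pol h) 5 = 1).

(** Expected number of further matched edges, when every pair is an edge
    independently with probability p; fuel bounds the number of probes. *)
Fixpoint exp_value (p : R) (fuel : nat) (pol : policy) (h : history) : R :=
  match fuel with
  | O => 0
  | S f => sum_f_R0 (fun e => pol h e *
             (p * (1 + exp_value p f pol (h ++ [(e, true)]))
              + (1 - p) * exp_value p f pol (h ++ [(e, false)]))) 5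
  end.

(** Expected size of the matching produced by pol (at most 6 probes occur). *)
Definition expected_matching (p : R) (pol : policy) : R := exp_value p 6 pol [].

From Stdlib Require Import Reals QArith Qreals Qminmax Lra Lia List.
Import ListNotations.
Open Scope R_scope.

(** The game has finitely many histories, so its value is given
    by the Bellman recursion [opt]: after history [h], with [n] probes left,
    the best achievable expectation is the maximum over valid pairs [e] of
    [p (1 + opt(h,e,edge)) + (1-p) opt(h,e,no edge)] (and 0 if no pair is
    valid).  An admissible policy averages this quantity with weights
    summing to at most 1, so by induction its expectation never exceeds
    [opt] (this needs [0 <= p <= 1]).  Conversely the greedy policy probing
    the first valid pair has an exactly computable expectation [greedy_val].
    Both recursions run over the rationals for any rational [q] in [0,1];
    for [q = 0.64] a computation shows that they coincide with the closed
    form of the theorem, which gives the upper bound and its attainment. *)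

Lemma weighted_sum_le (w g : nat -> R) (M : R) (N : nat) :
  0 <= M -> (forall e, (e <= N)%nat -> 0 <= w e) -> sum_f_R0 w N <= 1 ->
  (forall e, (e <= N)%nat -> w e * g e <= w e * M) ->
  sum_f_R0 (fun e => w e * g e) N <= M.
Proof.
  intros HM Hw Hsum Hg.
  apply Rle_trans with (sum_f_R0 (fun e => w e * M) N); [now apply sum_Rle|].
  rewrite <- scal_sum. nra.
Qed.

Definition point_mass (k e : nat) : R := if Nat.eqb e k then 1 else 0.

Lemma sum_point_mass (k N : nat) (g : nat -> R) :
  sum_f_R0 (fun e => point_mass k e * g e) N = if Nat.leb k N then g k else 0.
Proof.
  unfold point_mass; induction N as [|N IH]; cbn [sum_f_R0].
  - destruct k; simpl; ring.
  - rewrite IH. destruct (Nat.eqb (S N) k) eqn:E.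
    + apply Nat.eqb_eq in E; subst k.
      replace (Nat.leb (S N) N) with false by (symmetry; apply Nat.leb_gt; lia).
      rewrite Nat.leb_refl; ring.
    + destruct (Nat.leb k N) eqn:L.
      * replace (Nat.leb k (S N)) with true
          by (symmetry; apply Nat.leb_le; apply Nat.leb_le in L; lia); ring.
      * apply Nat.leb_gt in L. apply Nat.eqb_neq in E.
        replace (Nat.leb k (S N)) with false by (symmetry; apply Nat.leb_gt; lia); ring.
Qed.

Definition pair_indices : list nat := seq 0 6.

Lemma valid_lt (h : history) (e : nat) : valid h e = true -> (e < 6)%nat.
Proof.
  unfold valid; intro V.
  repeat (apply andb_prop in V; destruct V as [V _]).
  now apply Nat.ltb_lt.
Qed.

Lemma admissible_mass_le_1 (pol : policy) (h : history) :
  admissible pol -> sum_f_R0 (pol h) 5 <= 1.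
Proof.
  intros Hp; destruct (Hp h) as [Hnn [Hinv Hsum]].
  destruct (existsb (valid h) pair_indices) eqn:E.
  - apply existsb_exists in E as [e [_ V]].
    rewrite Hsum; [lra | now exists e].
  - assert (Hzero : forall e, (e <= 5)%nat -> pol h e = 0).
    { intros e He; apply Hinv; [lia|].
      destruct (valid h e) eqn:V; [|reflexivity].
      rewrite <- E; symmetry; apply existsb_exists.
      exists e; split; [apply in_seq; lia | exact V]. }
    rewrite (sum_eq _ (fun _ => 0) 5 Hzero); simpl; lra.
Qed.

Section Recursions.

Variable q : Q.
Hypothesis q_ge0 : 0 <= Q2R q.
Hypothesis q_le1 : Q2R q <= 1.

Definition probe_value (a c : Q) : Q := Qred (q * (1 + a) + (1 - q) * c).

Lemma Q2R_probe_value (a c : Q) :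
  Q2R (probe_value a c) = Q2R q * (1 + Q2R a) + (1 - Q2R q) * Q2R c.
Proof.
  unfold probe_value; rewrite (Qeq_eqR _ _ (Qred_correct _)).
  rewrite Q2R_plus, !Q2R_mult, Q2R_plus, Q2R_minus.
  replace (Q2R 1) with 1 by (unfold Q2R; simpl; lra); reflexivity.
Qed.

Lemma probe_value_ge (x y : R) (a c : Q) :
  x <= Q2R a -> y <= Q2R c ->
  Q2R q * (1 + x) + (1 - Q2R q) * y <= Q2R (probe_value a c).
Proof. intros Ha Hc; rewrite Q2R_probe_value; nra. Qed.

Definition best_valid (h : history) (f : nat -> Q) (l : list nat) : Q :=
  fold_right (fun e acc => if valid h e then Qmax (f e) acc else acc) 0%Q l.

Lemma best_valid_ge0 (h : history) (f : nat -> Q) (l : list nat) :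
  0 <= Q2R (best_valid h f l).
Proof.
  induction l as [|e l IH]; simpl.
  - unfold Q2R; simpl; lra.
  - destruct (valid h e); [|exact IH].
    eapply Rle_trans; [exact IH|]. apply Qle_Rle, Q.le_max_r.
Qed.

Lemma best_valid_ge (h : history) (f : nat -> Q) (l : list nat) (e : nat) :
  In e l -> valid h e = true -> Q2R (f e) <= Q2R (best_valid h f l).
Proof.
  intros Hin V; induction l as [|e' l IH]; [destruct Hin|simpl].
  destruct Hin as [<- | Hin].
  - rewrite V; apply Qle_Rle, Q.le_max_l.
  - destruct (valid h e'); [|now apply IH].
    eapply Rle_trans; [now apply IH|]. apply Qle_Rle, Q.le_max_r.
Qed.

Fixpoint opt (n : nat) (h : history) : Q :=
  match n with
  | O => 0%Q
  | S m => best_valid h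
             (fun e => probe_value (opt m (h ++ [(e, true)])) (opt m (h ++ [(e, false)])))
             pair_indices
  end.

Lemma exp_value_le_opt (pol : policy) (n : nat) (h : history) :
  admissible pol -> exp_value (Q2R q) n pol h <= Q2R (opt n h).
Proof.
  intros Hp; revert h; induction n as [|n IH]; intro h; cbn [exp_value opt].
  - unfold Q2R; simpl; lra.
  - destruct (Hp h) as [Hnn [Hinv _]].
    apply weighted_sum_le.
    + apply best_valid_ge0.
    + intros e He; apply Hnn; lia.
    + now apply admissible_mass_le_1.
    + intros e He; destruct (valid h e) eqn:V.
      * apply Rmult_le_compat_l; [apply Hnn; lia|].
        eapply Rle_trans; [apply probe_value_ge; apply IH|].
        apply (best_valid_ge h (fun e =>
          probe_value (opt n (h ++ [(e, true)])) (opt n (h ++ [(e, false)]))));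
          [apply in_seq; lia | exact V].
      * rewrite (Hinv e ltac:(lia) V); lra.
Qed.

Definition greedy_choice (h : history) : option nat := find (valid h) pair_indices.

Definition greedy : policy := fun h e =>
  match greedy_choice h with Some k => point_mass k e | None => 0 end.

Lemma greedy_admissible : admissible greedy.
Proof.
  intro h; unfold greedy.
  destruct (greedy_choice h) as [k|] eqn:C.
  2:{ split; [|split]; [intros; lra | intros; lra | intros [e V]; exfalso].
      rewrite (find_none _ _ C e) in V; [discriminate|].
      apply in_seq; apply valid_lt in V; lia. }
  apply find_some in C as [Hin Vk]; apply in_seq in Hin.
  split; [|split].
  - intros e _; unfold point_mass; destruct (Nat.eqb e k); lra.
  - intros e _ V; unfold point_mass; destruct (Nat.eqb e k) eqn:E; [|reflexivity].
    apply Nat.eqb_eq in E; congruence.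
  - intros _. rewrite (sum_eq _ (fun e => point_mass k e * 1) 5)
      by (intros; ring).
    rewrite sum_point_mass. replace (Nat.leb k 5) with true
      by (symmetry; apply Nat.leb_le; lia); reflexivity.
Qed.

Fixpoint greedy_val (n : nat) (h : history) : Q :=
  match n with
  | O => 0%Q
  | S m => match greedy_choice h with
           | Some k => probe_value (greedy_val m (h ++ [(k, true)]))
                                   (greedy_val m (h ++ [(k, false)]))
           | None => 0%Q
           end
  end.

Lemma exp_value_greedy (n : nat) (h : history) :
  exp_value (Q2R q) n greedy h = Q2R (greedy_val n h).
Proof.
  revert h; induction n as [|n IH]; intro h; cbn [exp_value greedy_val];
    [unfold Q2R; simpl; lra|].
  unfold greedy; destruct (greedy_choice h) as [k|] eqn:C.
  - apply find_some in C as [Hin _]; apply in_seq in Hin.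
    rewrite sum_point_mass, Q2R_probe_value, !IH.
    replace (Nat.leb k 5) with true by (symmetry; apply Nat.leb_le; lia); reflexivity.
  - rewrite (sum_eq _ (fun _ => 0) 5) by (intros; ring).
    simpl; unfold Q2R; simpl; lra.
Qed.

End Recursions.

Theorem lemma6 :
  let p := 64 / 100 in
  let v := p + p ^ 2 + (1 - p) * p * (1 + p) + (1 - p) ^ 2 * p * (1 + p)
           + (1 - p) ^ 3 * (1 - (1 - p) ^ 3) in
  (forall pol : policy, admissible pol -> expected_matching p pol <= v) /\
  (exists pol : policy, admissible pol /\ expected_matching p pol = v).
Proof.
  intros p v.
  set (q := (64 # 100)%Q).
  assert (Hp : p = Q2R q) by (unfold p, q, Q2R; simpl; lra).
  assert (Hq : 0 <= Q2R q <= 1) by (rewrite <- Hp; unfold p; lra).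
  set (vq := (392569184 # 244140625)%Q).
  assert (Hv : v = Q2R vq) by (unfold v, p, vq, Q2R; simpl; lra).
  assert (Hopt : opt q 6 [] = vq) by (vm_compute; reflexivity).
  assert (Hgreedy : greedy_val q 6 [] = vq) by (vm_compute; reflexivity).
  unfold expected_matching; rewrite Hp, Hv.
  split.
  - intros pol Hpol; rewrite <- Hopt.
    apply exp_value_le_opt; tauto.
  - exists greedy; split; [apply greedy_admissible|].
    now rewrite exp_value_greedy, Hgreedy.
Qed.
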